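(* Let $\mathcal{H}$ be a Hilbert space of dimension $d$ with $2\le d<\infty$, let $X$ be a set with $d^2$ elements, and let $\mathbf{U}=\{U_x:x\in X\}$ and $\mathbf{U}'=\{U'_x:x\in X\}$ be unitary bases for $\mathcal{H}$. Then the following are equivalent: (i) $\mathbf{U}$ is phase-equivalent to $\mathbf{U}'$; (ii) for some $\mathbf{U}$-associated tag $(x_0,U_{x_0},\mathbf{W})$ and some $\mathbf{U}'$-associated tag $(x_0',U'_{x_0'},\mathbf{W}')$, $\mathbf{W}$ is phase-collectively-unitarily equivalent to $\mathbf{W}'$; (iii) for each $\mathbf{U}$-associated tag $(x_0,U_{x_0},\mathbf{W})$ there is a $\mathbf{U}'$-associated tag $(x_0',U'_{x_0'},\mathbf{W}')$ such that $\mathbf{W}$ is phase-collectively-unitarily equivalent to $\mathbf{W}'$; (iv) $\mathbf{U}$ and $\mathbf{U}'$ have the same fan systems to within phase-collective-unitary equivalence.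
   Context: $S^1$ is the unit circle in $\mathbb{C}$. A unitary basis is a family $\mathbf{U}=\{U_x:x\in X\}$ of unitaries on $\mathcal{H}$ with $\operatorname{tr}(U_x^*U_y)=d\,\delta_{xy}$. Unitary bases $\mathbf{U},\mathbf{U}'$ are equivalent if there are unitaries $V_1,V_2$ and a bijection $x\mapsto x'$ of $X$ with $U'_{x'}=V_1U_xV_2$ for all $x$; they are phase-equivalent if there is a function $f:X\to S^1$ such that $\{f(x)U'_x:x\in X\}$ is equivalent to $\{U_x:x\in X\}$. For $x_0\in X$, the $\mathbf{U}$-associated tag at $x_0$ is $(x_0,U_{x_0},\mathbf{W})$ with $\mathbf{W}=\{U_{x_0}^*U_x: x\in X, x\ne x_0\}$; this $\mathbf{W}$ is a unitary system, i.e. a set of unitaries $W_y$ with $\operatorname{tr}W_y=0$ and $\operatorname{tr}(W_x^*W_y)=d\delta_{xy}$. For sets $\mathcal{F},\mathcal{G}$ of operators: $\mathcal{F}$ is collectively unitarily equivalent (CUE) to $\mathcal{G}$ (via $V$) if there is a unitary $V$ with $\mathcal{G}=\{V^*AV:A\in\mathcal{F}\}$; $\mathcal{F}$ is phase-collectively-unitarily equivalent (PCUE) to $\mathcal{G}$ if there is a function $f:\mathcal{F}\to S^1$ with $\{f(A)A:A\in\mathcal{F}\}$ CUE $\mathcal{G}$. A $\mathbf{W}$-MASS is a subset of $\mathbf{W}$ consisting of pairwise commuting elements and maximal with this property; the fan representation $\mathcal{V}_{\mathbf{W}}$ of $\mathbf{W}$ is the family of all $\mathbf{W}$-MASS's (whose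 union is $\mathbf{W}$). The fan system of $\mathbf{U}$ is $\{\mathcal{V}_{\mathbf{W}} : (x_0,U_{x_0},\mathbf{W})$ is the $\mathbf{U}$-associated tag at $x_0$, $x_0\in X\}$. Two fans $\{\mathbf{V}_\alpha:\alpha\in\Lambda\}$ (of $\mathbf{W}$) and $\{\mathbf{V}'_\beta:\beta\in\Lambda'\}$ (of $\mathbf{W}'$) are PCUE if there exist a unitary $V$, a function $h:\mathbf{W}\to S^1$ and a bijection $\alpha\mapsto\alpha'$ of $\Lambda$ onto $\Lambda'$ with $\{h(A)A: A\in\mathbf{V}_\alpha\}$ CUE $\mathbf{V}'_{\alpha'}$ via $V$ for every $\alpha$; two fan systems are the same to within PCUE if every fan in either is PCUE to some fan in the other. *)

From HB Require Import structures.
From mathcomp Require Import all_boot all_order all_algebra.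
From mathcomp Require Export spectral.
Set Implicit Arguments. Unset Strict Implicit. Unset Printing Implicit Defensive.
Import Order.TTheory GRing.Theory Num.Theory.
Local Open Scope ring_scope.
Local Open Scope sesquilinear_scope.

(* The Hilbert space H of dimension d is modelled as C^d, operators as
   'M[C]_d, the adjoint as the conjugate transpose  A ^t*  (spectral.v),
   and unitarity as  A \is unitarymx  (A *m A^t* = 1). *)

Section UnitaryBases.
Variables (C : numClosedFieldType) (d : nat).
Local Notation M := 'M[C]_d.

Definition adjmx (A : M) : M := A ^t*.

Definition opset := M -> Prop.

Definition unitary_basis (X : finType) (U : X -> M) : Prop :=
  (forall x, U x \is unitarymx) /\
  (forall x y, \tr (adjmx (U x) *m U y) = if x == y then d%:R else 0).

Definition equiv_basis (X : finType) (U U' : X -> M) : Prop :=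
  exists (V1 V2 : M) (s : X -> X),
    [/\ V1 \is unitarymx, V2 \is unitarymx, bijective s &
        forall x, U' (s x) = V1 *m U x *m V2].

Definition phase_equiv (X : finType) (U U' : X -> M) : Prop :=
  exists f : X -> C, (forall x, `|f x| = 1) /\
    equiv_basis (fun x => f x *: U' x) U.

Definition tagW (X : finType) (U : X -> M) (x0 : X) : opset :=
  fun A => exists2 x, x != x0 & A = adjmx (U x0) *m U x.

Definition CUE_via (F G : opset) (V : M) : Prop :=
  V \is unitarymx /\
  (forall B, G B <-> exists2 A, F A & B = adjmx V *m A *m V).

Definition CUE (F G : opset) : Prop := exists V, CUE_via F G V.

Definition phase_image (f : M -> C) (F : opset) : opset :=
  fun B => exists2 A, F A & B = f A *: A.

Definition PCUE (F G : opset) : Prop :=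
  exists f : M -> C, (forall A, F A -> `|f A| = 1) /\ CUE (phase_image f F) G.

Definition commuting_set (S : opset) : Prop :=
  forall A B, S A -> S B -> A *m B = B *m A.

Definition MASS (W S : opset) : Prop :=
  [/\ forall A, S A -> W A,
      commuting_set S &
      forall S', (forall A, S A -> S' A) -> (forall A, S' A -> W A) ->
                 commuting_set S' -> forall A, S' A -> S A].

(* the fan representation of W is the family of all W-MASSes,
   i.e. the collection  MASS W : opset -> Prop  (indexed by itself). *)
Definition fan (W : opset) : opset -> Prop := MASS W.

Definition fan_PCUE (W W' : opset) : Prop :=
  exists (V : M) (h : M -> C) (phi : opset -> opset),
    [/\ V \is unitarymx,
        (forall A, W A -> `|h A| = 1),
        (forall S, fan W S -> fan W' (phi S)),
        (forall S1 S2, fan W S1 -> fan W S2 -> phi S1 = phi S2 -> S1 = S2) &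
        (forall S', fan W' S' -> exists2 S, fan W S & phi S = S') /\
        (forall S, fan W S -> CUE_via (phase_image h S) (phi S) V)].

Definition same_fan_systems_PCUE (X : finType) (U U' : X -> M) : Prop :=
  (forall x0, exists x0', fan_PCUE (tagW U x0) (tagW U' x0')) /\
  (forall x0', exists x0, fan_PCUE (tagW U' x0') (tagW U x0)).

End UnitaryBases.

From HB Require Import structures.
From mathcomp Require Import all_boot all_order all_algebra.
From mathcomp Require Import reals complex.
From Stdlib Require Import FunctionalExtensionality PropExtensionality.
Set Implicit Arguments. Unset Strict Implicit. Unset Printing Implicit Defensive.
Import Order.TTheory GRing.Theory Num.Theory.
Local Open Scope ring_scope.

(* If U'_(s x) = V1 (f x U_x) V2, the tag of U' at s x0 consists of the
   V2-conjugates of the elements adj(U_x0) U_x of the tag of U at x0, rescaled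
   by the phases conj(f x0) f x.  Conversely, a phase-collective-unitary
   equivalence A |-> adj(V) (h A A) V from the tag of U at x0 onto that of U'
   at x0' matches every x with some x' =: s x, which amounts to
   U'_(s x) = (U'_x0' adj(V) adj(U_x0)) (h x U_x) V.  For fans: a unitary
   conjugation followed by a nonzero rescaling preserves and reflects
   commutation, so it maps MASSes bijectively onto MASSes; and as every element
   of a finite set of operators lies in some MASS, a PCUE of fans is a PCUE of
   the sets themselves. *)

Section UnitaryConjugation.
Variables (C : numClosedFieldType) (d : nat).
Local Notation M := 'M[C]_d.

Lemma unitary_mulmxV (V : M) : V \is unitarymx -> V *m adjmx V = 1%:M.
Proof. by move/unitarymxP. Qed.

Lemma unitary_mulVmx (V : M) : V \is unitarymx -> adjmx V *m V = 1%:M.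
Proof. by move=> Vu; rewrite -[adjmx V]mul1mx mulmxKtV. Qed.

Lemma adjmx_unitary (V : M) : (adjmx V \is unitarymx) = (V \is unitarymx).
Proof. exact: trmxC_unitary. Qed.

Lemma adjmxM (A B : M) : adjmx (A *m B) = adjmx B *m adjmx A.
Proof. by rewrite /adjmx trmx_mul map_mxM. Qed.

Lemma adjmxZ (a : C) (A : M) : adjmx (a *: A) = a^* *: adjmx A.
Proof. by rewrite /adjmx linearZ /= map_mxZ. Qed.

Lemma unitary_mulmxI (V A B : M) : V \is unitarymx -> V *m A = V *m B -> A = B.
Proof.
by move=> Vu e; rewrite -[A]mul1mx -[B]mul1mx -(unitary_mulVmx Vu) -!mulmxA e.
Qed.

Lemma unitary_mulImx (V A B : M) : V \is unitarymx -> A *m V = B *m V -> A = B.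
Proof.
by move=> Vu e; rewrite -[A]mulmx1 -[B]mulmx1 -(unitary_mulmxV Vu) !mulmxA e.
Qed.

Definition uconj (V A : M) : M := adjmx V *m A *m V.

Lemma uconjM (V A B : M) : V \is unitarymx ->
  uconj V A *m uconj V B = uconj V (A *m B).
Proof.
move=> Vu; rewrite /uconj !mulmxA; congr (_ *m _).
by rewrite -!mulmxA (mulmxA V) (unitary_mulmxV Vu) mul1mx.
Qed.

Lemma uconjZ (V A : M) (a : C) : uconj V (a *: A) = a *: uconj V A.
Proof. by rewrite /uconj -scalemxAr -scalemxAl. Qed.

Lemma uconj_inj (V : M) : V \is unitarymx -> injective (uconj V).
Proof.
move=> Vu A B; rewrite /uconj => /(unitary_mulImx Vu).
by apply: unitary_mulmxI; rewrite adjmx_unitary.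
Qed.

Lemma norm1_neq0 (a : C) : `|a| = 1 -> a != 0.
Proof. by move=> a1; rewrite -normr_eq0 a1 oner_eq0. Qed.

Lemma norm1_conjCM (a : C) : `|a| = 1 -> a^* * a = 1.
Proof. by move=> a1; rewrite -normCKC a1 expr1n. Qed.

Lemma uconjZ_commute (V A B : M) (a b : C) :
  V \is unitarymx -> a != 0 -> b != 0 ->
  (uconj V (a *: A) *m uconj V (b *: B) = uconj V (b *: B) *m uconj V (a *: A))
  <-> (A *m B = B *m A).
Proof.
move=> Vu a0 b0; rewrite !uconjM // -!scalemxAl -!scalemxAr !scalerA !uconjZ.
rewrite [b * a]mulrC; split=> [|-> //].
by move/(scalemx_inj (mulf_neq0 a0 b0))/(uconj_inj Vu).
Qed.

End UnitaryConjugation.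

Section MaximalAbelianSubsets.
Variables (C : numClosedFieldType) (d : nat).
Local Notation M := 'M[C]_d.
Local Notation opset := (opset C d).

Lemma opset_ext (S T : opset) : (forall A, S A <-> T A) -> S = T.
Proof.
move=> ST; apply: functional_extensionality => A.
exact: propositional_extensionality.
Qed.

Definition opimage (g : M -> M) (S : opset) : opset :=
  fun B => exists2 A, S A & B = g A.

Definition oppreimage (W : opset) (g : M -> M) (S' : opset) : opset :=
  fun A => W A /\ S' (g A).

Definition phase_uconj (V : M) (h : M -> C) (A : M) : M := uconj V (h A *: A).

Lemma CUE_via_phase_image (F G : opset) (V : M) (h : M -> C) :
  V \is unitarymx ->
  CUE_via (phase_image h F) G V <->
  (forall B, G B <-> opimage (phase_uconj V h) F B).
Proof.
move=> Vu; split=> [[_ FG] B | FG]; last split=> // B; rewrite FG.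
  split; first by case=> _ [A FA ->] ->; exists A.
  by case=> A FA ->; exists (h A *: A) => //; exists A.
split; last by case=> _ [A FA ->] ->; exists A.
by case=> A FA ->; exists (h A *: A) => //; exists A.
Qed.

Section PhaseConjugation.
Variables (W W' : opset) (V : M) (h : M -> C).
Hypotheses (h_norm : forall A, W A -> `|h A| = 1)
           (WW' : CUE_via (phase_image h W) W' V).
Local Notation g := (phase_uconj V h).

Let Vu : V \is unitarymx := WW'.1.
Let W'E := (CUE_via_phase_image W W' h Vu).1 WW'.

Lemma W'_phase_uconj A : W A -> W' (g A).
Proof. by move=> WA; apply/W'E; exists A. Qed.

Lemma phase_uconj_commute A B : W A -> W B ->
  (g A *m g B = g B *m g A) <-> (A *m B = B *m A).
Proof. by move=> WA WB; apply: uconjZ_commute => //; apply/norm1_neq0/h_norm. Qed.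

Lemma MASS_opimage S : MASS W S -> MASS W' (opimage g S).
Proof.
case=> SW Scomm Smax; split.
- by move=> _ [A SA ->]; apply/W'_phase_uconj/SW.
- by move=> _ _ [A SA ->] [B SB ->]; apply/phase_uconj_commute; auto.
- move=> S' SS' S'W' S'comm B S'B.
  have [A WA eB] := (W'E B).1 (S'W' B S'B).
  exists A => //; apply: (Smax (oppreimage W g S')) => [A' SA'|A' []||] //.
  + by split; [exact: SW | apply: SS'; exists A'].
  + by move=> A1 A2 [W1 S1] [W2 S2]; apply/phase_uconj_commute => //; apply: S'comm.
  + by split; rewrite // -eB.
Qed.

Lemma MASS_oppreimage S' : MASS W' S' -> MASS W (oppreimage W g S').
Proof.
case=> S'W' S'comm S'max; split; first by move=> A [].
  by move=> A B [WA S'A] [WB S'B]; apply/phase_uconj_commute => //; apply: S'comm.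
move=> T ST TW Tcomm A TA; split; first exact: TW.
apply: (S'max (opimage g T)); last by exists A.
- move=> B S'B; have [A' WA' eB] := (W'E B).1 (S'W' B S'B).
  by exists A' => //; apply: ST; split; rewrite // -eB.
- by move=> _ [A' TA' ->]; apply/W'_phase_uconj/TW.
- by move=> _ _ [A1 T1 ->] [A2 T2 ->]; apply/phase_uconj_commute; auto.
Qed.

Lemma opimage_preimage S' : MASS W' S' -> opimage g (oppreimage W g S') = S'.
Proof.
move=> [S'W' _ _]; apply: opset_ext => B; split; first by case=> A [_ S'A] ->.
move=> S'B; have [A WA eB] := (W'E B).1 (S'W' B S'B).
by exists A => //; split; rewrite // -eB.
Qed.

Lemma oppreimage_image S : MASS W S -> oppreimage W g (opimage g S) = S.
Proof.
(* The left-hand side is a commuting subset of W containing S. *)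
move=> MS; have [SW _ Smax] := MS.
have [_ Tcomm _] := MASS_oppreimage (MASS_opimage MS).
apply: opset_ext => A; split; last by move=> SA; split; [exact: SW | exists A].
by apply: Smax => [A' SA'|A' []|] //; split; [exact: SW | exists A'].
Qed.

End PhaseConjugation.

Lemma PCUE_fan_PCUE (W W' : opset) : PCUE W W' -> fan_PCUE W W'.
Proof.
case=> h [h_norm [V WW']]; have Vu := WW'.1.
exists V, h, (opimage (phase_uconj V h)); split=> //.
- by move=> S; apply: MASS_opimage.
- move=> S1 S2 MS1 MS2 e.
  by rewrite -(oppreimage_image h_norm WW' MS1) e (oppreimage_image h_norm WW' MS2).
split=> [S' MS'|S MS].
  by exists (oppreimage W (phase_uconj V h) S');
    [exact: MASS_oppreimage MS' | exact: opimage_preimage MS'].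
exact/(CUE_via_phase_image _ _ _ Vu).
Qed.

Definition MASS_covered (W : opset) : Prop :=
  forall A, W A -> exists2 S, MASS W S & S A.

Lemma fan_PCUE_PCUE (W W' : opset) :
  MASS_covered W -> MASS_covered W' -> fan_PCUE W W' -> PCUE W W'.
Proof.
move=> covW covW' [V [h [phi [Vu h_norm MSphi _ [phi_onto SphiS]]]]].
have phiE S : MASS W S -> forall B, phi S B <-> opimage (phase_uconj V h) S B.
  by move=> MS; apply/(CUE_via_phase_image _ _ _ Vu)/SphiS.
exists h; split=> //; exists V; apply/(CUE_via_phase_image _ _ _ Vu) => B; split.
- move=> W'B; have [S' MS' S'B] := covW' B W'B.
  have [S MS eS'] := phi_onto S' MS'; rewrite -eS' in S'B.
  have [A SA ->] := (phiE S MS B).1 S'B.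
  by exists A => //; case: MS => SW _ _; apply: SW.
- case=> A WA ->; have [S MS SA] := covW A WA.
  by have [SW' _ _] := MSphi S MS; apply/SW'/(phiE S MS); exists A.
Qed.

Lemma MASS_covered_fin (Y : finType) (P : pred Y) (g : Y -> M) :
  MASS_covered (fun B => exists2 y, P y & B = g y).
Proof.
(* A commuting subset of maximal size containing y0 is a MASS. *)
move=> _ [y0 Py0 ->].
pose commb (T : {set Y}) :=
  [forall a in T, forall b in T, g a *m g b == g b *m g a].
pose good (T : {set Y}) := [&& T \subset P, y0 \in T & commb T].
have good_y0 : good [set y0].
  apply/and3P; split; [by apply/subsetP => z /set1P -> | exact: set11 |].
  by apply/forall_inP => a /set1P ->; apply/forall_inP => b /set1P ->.
have [T /and3P [TP Ty0 /forall_inP Tcomm] Tmax] :=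
  @arg_maxnP _ [set y0] good (fun T => #|T|) good_y0.
exists (fun B => exists2 y, y \in T & B = g y); last by exists y0.
split.
- by move=> _ [y yT ->]; exists y => //; apply: (subsetP TP).
- by move=> _ _ [a aT ->] [b bT ->]; apply/eqP/(forall_inP (Tcomm a aT)).
- move=> S' TS' S'W S'comm B S'B; have [y Py eB] := S'W B S'B.
  exists y => //; apply: contraT => yNT.
  have S'yT a : a \in y |: T -> S' (g a).
    by case/setU1P => [-> | aT]; [rewrite -eB | apply: TS'; exists a].
  have : good (y |: T).
    apply/and3P; split; [|exact: setU1r|].
      by apply/subsetP => z /setU1P [-> | /(subsetP TP)].
    apply/forall_inP => a aT; apply/forall_inP => b bT.
    by apply/eqP/S'comm; apply: S'yT.
  by move/Tmax; rewrite cardsU1 yNT /= add1n ltnn.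
Qed.

End MaximalAbelianSubsets.

Section UnitaryBases.
Variables (C : numClosedFieldType) (d : nat) (X : finType).
Hypothesis d_gt0 : (0 < d)%N.
Local Notation M := 'M[C]_d.

Lemma unitary_basis_inj (U : X -> M) : unitary_basis U -> injective U.
Proof.
move=> [_ trU] x y eU; have := trU x y; rewrite -[U y]eU trU eqxx.
by case: eqP => // _ /eqP; rewrite pnatr_eq0 eqn0Ngt d_gt0.
Qed.

Lemma tagW_inj (U : X -> M) x0 :
  unitary_basis U -> injective (fun x => adjmx (U x0) *m U x).
Proof.
move=> bU x y /(unitary_mulmxI _); rewrite adjmx_unitary => /(_ (bU.1 x0)).
exact: unitary_basis_inj.
Qed.

Lemma phase_equiv_sym (U U' : X -> M) : phase_equiv U U' -> phase_equiv U' U.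
Proof.
case=> f [f_norm [V1 [V2 [s [V1u V2u [t st ts] Es]]]]].
exists (fun y => (f (t y))^*); split=> [y|]; first by rewrite norm_conjC.
exists (adjmx V1), (adjmx V2), t.
split; rewrite ?adjmx_unitary //; first by exists s.
move=> y; rewrite -[in U y](ts y) Es -!(scalemxAr, scalemxAl) !scalerA.
rewrite norm1_conjCM // scale1r !mulmxA unitary_mulVmx // mul1mx.
by rewrite -mulmxA unitary_mulmxV // mulmx1.
Qed.

Lemma phase_equiv_tagW_PCUE (U U' : X -> M) :
  unitary_basis U -> phase_equiv U' U ->
  forall x0, exists x0', PCUE (tagW U x0) (tagW U' x0').
Proof.
move=> bU [g [g_norm [V1 [V2 [s [V1u V2u s_bij Es]]]]]] x0; exists (s x0).
pose h A := (g x0)^* * g (odflt x0 [pick y | A == adjmx (U x0) *m U y]).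
have h_tag y : h (adjmx (U x0) *m U y) = (g x0)^* * g y.
  rewrite /h; case: pickP => [z /eqP/(tagW_inj bU) -> // | /(_ y)].
  by rewrite eqxx.
have g_tag y :
    phase_uconj V2 h (adjmx (U x0) *m U y) = adjmx (U' (s x0)) *m U' (s y).
  rewrite /phase_uconj h_tag !Es !adjmxM adjmxZ /uconj -!(scalemxAr, scalemxAl).
  by rewrite scalerA !mulmxA -(mulmxA _ _ V1) unitary_mulVmx // mulmx1.
exists h; split=> [A _|]; first by rewrite normrM norm_conjC !g_norm mulr1.
exists V2; apply/CUE_via_phase_image => // B; split.
- case: s_bij => t st ts [y' y'N ->]; rewrite -(ts y') -g_tag.
  exists (adjmx (U x0) *m U (t y')) => //; exists (t y') => //.
  by rewrite -(inj_eq (can_inj st)) ts.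
- case=> _ [y yN ->] ->; rewrite g_tag; exists (s y) => //.
  by rewrite (inj_eq (bij_inj s_bij)).
Qed.

Lemma tagW_PCUE_phase_equiv (U U' : X -> M) x0 x0' :
  unitary_basis U -> unitary_basis U' ->
  PCUE (tagW U x0) (tagW U' x0') -> phase_equiv U' U.
Proof.
move=> bU bU' [f [f_norm [V WW']]]; have Vu := WW'.1.
have W'E := (CUE_via_phase_image _ _ _ Vu).1 WW'.
(* x0 lies outside the tag; it is matched with x0' at phase 1, both tags'
   would-be elements at the base point being 1. *)
pose phi x := if x == x0 then 1 else f (adjmx (U x0) *m U x).
have phi_norm x : `|phi x| = 1.
  rewrite /phi; case: eqP => [_|/eqP xN]; first exact: normr1.
  by apply: f_norm; exists x.
have tag_x0 : adjmx (U' x0') *m U' x0' = uconj V (phi x0 *: (adjmx (U x0) *m U x0)).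
  rewrite /phi eqxx scale1r !unitary_mulVmx ?bU.1 ?bU'.1 //.
  by rewrite /uconj mulmx1 unitary_mulVmx.
have match_tag x : exists x',
    adjmx (U' x0') *m U' x' = uconj V (phi x *: (adjmx (U x0) *m U x)).
  have [->|xN] := eqVneq x x0; first by exists x0'.
  have [x' _ e] : tagW U' x0' (phase_uconj V f (adjmx (U x0) *m U x)).
    by apply/W'E; exists (adjmx (U x0) *m U x) => //; exists x.
  by exists x'; rewrite /phi (negbTE xN) -e.
have [s Es] := fin_all_exists match_tag.
have s_onto y : exists x, s x = y.
  have [->|yN] := eqVneq y x0'.
    by exists x0; apply: (tagW_inj (x0 := x0') bU'); rewrite /= Es tag_x0.
  have [_ [x xN ->] e] :
      opimage (phase_uconj V f) (tagW U x0) (adjmx (U' x0') *m U' y).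
    by apply/W'E; exists y.
  exists x; apply: (tagW_inj (x0 := x0') bU').
  by rewrite /= Es /phi (negbTE xN) e.
have [r rK] := fin_all_exists s_onto.
exists phi; split=> //; exists (U' x0' *m adjmx V *m adjmx (U x0)), V, s.
split=> //; first by rewrite !mul_unitarymx ?adjmx_unitary ?bU.1 ?bU'.1.
  by exists r => //; apply: canF_sym.
move=> x; apply: (unitary_mulmxI (V := adjmx (U' x0'))).
  by rewrite adjmx_unitary bU'.1.
rewrite Es /uconj !mulmxA unitary_mulVmx ?bU'.1 // mul1mx.
by rewrite -!(scalemxAr, scalemxAl) !mulmxA.
Qed.

End UnitaryBases.

Theorem theorem2p15 (R : realType) (d : nat) (X : finType)
    (U U' : X -> 'M[R[i]]_d) :
  (2 <= d)%N -> #|X| = (d ^ 2)%N ->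
  unitary_basis U -> unitary_basis U' ->
  [<-> phase_equiv U U';
       exists x0 x0', PCUE (tagW U x0) (tagW U' x0');
       forall x0, exists x0', PCUE (tagW U x0) (tagW U' x0');
       same_fan_systems_PCUE U U'].
Proof.
move=> d_ge2 cardX bU bU'; have d_gt0 : (0 < d)%N by apply: leq_trans d_ge2.
have [x1 _] : exists x : X, x \in X.
  by apply/card_gt0P; rewrite cardX expn_gt0 d_gt0.
have tagW_covered (V : X -> 'M[R[i]]_d) x0 : MASS_covered (tagW V x0).
  exact: (MASS_covered_fin (P := fun y => y != x0)).
tfae=> [PE | [x0 [x0' P]] | P | [fans _]].
- have [x0' P] := phase_equiv_tagW_PCUE d_gt0 bU (phase_equiv_sym PE) x1.
  by exists x1, x0'.
- exact: (phase_equiv_tagW_PCUE d_gt0 bU (tagW_PCUE_phase_equiv d_gt0 bU bU' P)).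
- have [x1' P1] := P x1.
  have PE := phase_equiv_sym (tagW_PCUE_phase_equiv d_gt0 bU bU' P1).
  split=> [x0 | x0'].
    by have [x0' Px0] := P x0; exists x0'; apply: PCUE_fan_PCUE.
  have [x0 Px0'] := phase_equiv_tagW_PCUE d_gt0 bU' PE x0'.
  by exists x0; apply: PCUE_fan_PCUE.
- have [x1' F] := fans x1.
  apply/phase_equiv_sym/(tagW_PCUE_phase_equiv d_gt0 bU bU').
  exact: fan_PCUE_PCUE (tagW_covered _ _) (tagW_covered _ _) F.
Qed.
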